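(* Let $\Phi$ be a finite crystallographic root system and let $\Psi\subset\Phi^+$ be an antichain in the root poset. Then (i) $\langle\beta,\gamma\rangle\le 0$ for all $\beta\ne\gamma$ in $\Psi$; (ii) there are at most $|\Psi|-1$ (unordered) pairs $\{\beta,\gamma\}$ of distinct roots in $\Psi$ for which $\mathcal{X}_\beta$ and $\mathcal{X}_\gamma$ are dependent; (iii) the graph on the vertex set $\Psi$ with an edge between $\beta\ne\gamma$ whenever $\mathcal{X}_\beta$ and $\mathcal{X}_\gamma$ are dependent has maximal vertex degree at most $3$.
   Context: $\Phi\subset V$ is a finite crystallographic root system (inner product $\langle\cdot,\cdot\rangle$) with simple roots $\Delta$, positive roots $\Phi^+$ and Weyl group $W$. The root poset is the partial order on $\Phi^+$ generated by $\beta\prec\gamma$ whenever $\gamma-\beta\in\Delta$; an antichain is a set of pairwise incomparable elements. For $\beta\in\Phi^+$, $\mathcal{X}_\beta$ is the Bernoulli random variable on $W$ (uniform) with $\mathcal{X}_\beta(w)=1$ if $w(\beta)\in-\Phi^+$ and $0$ otherwise. *)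

From HB Require Import structures.
From mathcomp Require Import all_boot all_order all_algebra.
From mathcomp Require Import boolp reals.
From Stdlib Require Import Relations.Relation_Operators.

Set Implicit Arguments.
Unset Strict Implicit.
Unset Printing Implicit Defensive.

Import Order.TTheory GRing.Theory Num.Theory.
Local Open Scope ring_scope.

Section RootSystems.
Variables (R : realType) (n : nat).
Notation vec := 'rV[R]_n.

Definition dot (u v : vec) : R := (u *m v^T) ord0 ord0.

(* the reflection s_a as a matrix acting on row vectors by v |-> v *m s_a:
   v *m refl_mx a = v - (2 <v,a>/<a,a>) a *)
Definition refl_mx (a : vec) : 'M[R]_n :=
  1%:M - (2 / dot a a) *: (a^T *m a).

Definition in_span (s : seq vec) (v : vec) : Prop :=
  exists c : 'I_(size s) -> R, v = \sum_(i < size s) c i *: s`_i.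

Definition is_root_system (Phi : seq vec) : Prop :=
  [/\ uniq Phi, 0 \notin Phi,
      (forall v : vec, in_span Phi v) /\
      (forall a b, a \in Phi -> b \in Phi -> b *m refl_mx a \in Phi),
      (forall a b, a \in Phi -> b \in Phi ->
         exists z : int, 2 * dot b a / dot a a = z%:~R) &
      (forall a (c : R), a \in Phi -> c *: a \in Phi -> c = 1 \/ c = -1)].

Definition nonneg_int_comb (Delta : seq vec) (v : vec) : Prop :=
  exists c : 'I_(size Delta) -> nat,
    v = \sum_(i < size Delta) (c i)%:R *: Delta`_i.

Definition lin_indep (s : seq vec) : Prop :=
  forall c : 'I_(size s) -> R,
    \sum_(i < size s) c i *: s`_i = 0 -> forall i, c i = 0.

Definition is_simple_system (Phi Delta : seq vec) : Prop :=
  [/\ uniq Delta, {subset Delta <= Phi}, lin_indep Delta &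
      forall a, a \in Phi -> nonneg_int_comb Delta a \/ nonneg_int_comb Delta (- a)].

Definition is_pos_root (Phi Delta : seq vec) (a : vec) : Prop :=
  a \in Phi /\ nonneg_int_comb Delta a.

Definition rp_cover (Phi Delta : seq vec) (b g : vec) : Prop :=
  [/\ is_pos_root Phi Delta b, is_pos_root Phi Delta g & g - b \in Delta].

Definition rp_le (Phi Delta : seq vec) : vec -> vec -> Prop :=
  clos_refl_trans vec (rp_cover Phi Delta).

Definition is_antichain (Phi Delta Psi : seq vec) : Prop :=
  [/\ uniq Psi, (forall b, b \in Psi -> is_pos_root Phi Delta b) &
      forall b g, b \in Psi -> g \in Psi -> b != g -> ~ rp_le Phi Delta b g].

Definition in_weyl (Phi : seq vec) (w : 'M[R]_n) : Prop :=
  exists s : seq vec, {subset s <= Phi} /\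
    w = foldr (fun a m => refl_mx a *m m) 1%:M s.

Definition weyl_enum (Phi : seq vec) (Wl : seq 'M[R]_n) : Prop :=
  uniq Wl /\ forall w, w \in Wl <-> in_weyl Phi w.

Definition Xrv (Phi Delta : seq vec) (b : vec) (w : 'M[R]_n) : bool :=
  `[< is_pos_root Phi Delta (- (b *m w)) >].

Definition prob (Wl : seq 'M[R]_n) (E : pred 'M[R]_n) : R :=
  (count E Wl)%:R / (size Wl)%:R.

Definition indep (Wl : seq 'M[R]_n) (X Y : 'M[R]_n -> bool) : Prop :=
  forall x y : bool,
    prob Wl (fun w => (X w == x) && (Y w == y)) =
    prob Wl (fun w => X w == x) * prob Wl (fun w => Y w == y).

Definition dependent (Phi Delta : seq vec) (Wl : seq 'M[R]_n) (b g : vec) : bool :=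
  ~~ `[< indep Wl (Xrv Phi Delta b) (Xrv Phi Delta g) >].

End RootSystems.

(* If two roots b <> g of an antichain had <b,g> > 0, then b - g would be a
   root, positive or negative, and adding or removing simple roots one at a
   time (induction on the height of b - g) would make b and g comparable.
   If <b,g> = 0, left multiplication by the reflection s_b permutes W,
   negates X_b and fixes X_g, so the four events {X_b = x, X_g = y} have the
   same probability and X_b, X_g are independent.  Hence dependent roots of
   the antichain are obtuse, and crystallographicity bounds the cosine of
   their angle by -1/2.  Since the unit vectors u_b of the antichain lie in
   the cone of the simple roots, the vectors sum_b u_b and 2 u_b + sum_g u_g
   (g ranging over the dependent neighbours of b) are nonzero; expanding
   their squared norms gives 0 < |Psi| - #edges and 0 < 4 - deg b. *)

From HB Require Import structures.
From mathcomp Require Import all_boot all_order all_algebra.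
From mathcomp Require Import boolp reals.
From mathcomp Require Import ring lra zify.
From Stdlib Require Import Relations.Relation_Operators.
Import Order.TTheory GRing.Theory Num.Theory.
Local Open Scope ring_scope.
Set Implicit Arguments.
Unset Strict Implicit.
Unset Printing Implicit Defensive.

Section InnerProduct.
Variables (R : realType) (n : nat).
Notation vec := 'rV[R]_n.

Lemma dotE (u v : vec) : dot u v = \sum_k u 0 k * v 0 k.
Proof. by rewrite /dot !mxE; apply: eq_bigr => k _; rewrite mxE. Qed.

Lemma dotC (u v : vec) : dot u v = dot v u.
Proof. by rewrite !dotE; apply: eq_bigr => k _; rewrite mulrC. Qed.

Lemma dotDl (u v w : vec) : dot (u + v) w = dot u w + dot v w.
Proof. by rewrite !dotE -big_split; apply: eq_bigr => k _; rewrite !mxE mulrDl. Qed.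

Lemma dotZl a (u w : vec) : dot (a *: u) w = a * dot u w.
Proof. by rewrite !dotE mulr_sumr; apply: eq_bigr => k _; rewrite !mxE mulrA. Qed.

Lemma dotNl (u w : vec) : dot (- u) w = - dot u w.
Proof. by rewrite -scaleN1r dotZl mulN1r. Qed.

Lemma dotBl (u v w : vec) : dot (u - v) w = dot u w - dot v w.
Proof. by rewrite dotDl dotNl. Qed.

Lemma dotDr (u v w : vec) : dot w (u + v) = dot w u + dot w v.
Proof. by rewrite dotC dotDl !(dotC w). Qed.

Lemma dotZr a (u w : vec) : dot w (a *: u) = a * dot w u.
Proof. by rewrite dotC dotZl dotC. Qed.

Lemma dotNr (u w : vec) : dot w (- u) = - dot w u.
Proof. by rewrite dotC dotNl dotC. Qed.

Lemma dotBr (u v w : vec) : dot w (u - v) = dot w u - dot w v.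
Proof. by rewrite dotDr dotNr. Qed.

Lemma dot0l (w : vec) : dot 0 w = 0.
Proof. by rewrite -(scale0r 0) dotZl mul0r. Qed.

Lemma dot_suml I (r : seq I) (P : pred I) (F : I -> vec) w :
  dot (\sum_(i <- r | P i) F i) w = \sum_(i <- r | P i) dot (F i) w.
Proof. by elim/big_rec2: _ => [|i x y _ <-]; rewrite ?dot0l ?dotDl. Qed.

Lemma dot_sumr I (r : seq I) (P : pred I) (F : I -> vec) w :
  dot w (\sum_(i <- r | P i) F i) = \sum_(i <- r | P i) dot w (F i).
Proof. by rewrite dotC dot_suml; apply: eq_bigr => i _; apply: dotC. Qed.

Lemma dot_ge0 (u : vec) : 0 <= dot u u.
Proof. by rewrite dotE; apply: sumr_ge0 => k _; apply: sqr_ge0. Qed.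

Lemma dot_eq0 (u : vec) : (dot u u == 0) = (u == 0).
Proof.
apply/idP/eqP => [|->]; last by rewrite dot0l.
rewrite dotE psumr_eq0 => [/allP u0|k _]; last exact: sqr_ge0.
apply/rowP => k; have := u0 k (mem_index_enum k).
by rewrite mulf_eq0 orbb mxE => /eqP.
Qed.

Lemma dot_gt0 (u : vec) : u != 0 -> 0 < dot u u.
Proof. by move=> u0; rewrite lt_def dot_eq0 u0 dot_ge0. Qed.

Lemma refl_mxE (a v : vec) : v *m refl_mx a = v - (2 / dot a a * dot v a) *: a.
Proof.
rewrite /refl_mx mulmxBr mulmx1 -scalemxAr mulmxA.
by rewrite [v *m a^T]mx11_scalar mul_scalar_mx scalerA.
Qed.

Lemma refl_mx_self (a : vec) : a != 0 -> a *m refl_mx a = - a.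
Proof.
move=> a0; have aa0 : dot a a != 0 by rewrite dot_eq0.
by rewrite refl_mxE mulfVK // scaler_nat mulr2n opprD addNKr.
Qed.

Lemma refl_mx_orth (a v : vec) : dot v a = 0 -> v *m refl_mx a = v.
Proof. by move=> va0; rewrite refl_mxE va0 mulr0 scale0r subr0. Qed.

Lemma refl_mx_invol (a v : vec) : a != 0 -> v *m refl_mx a *m refl_mx a = v.
Proof.
move=> a0; rewrite [v *m _]refl_mxE mulmxBl -scalemxAl refl_mx_self //.
by rewrite scalerN opprK refl_mxE subrK.
Qed.

Lemma refl_mxK (a : vec) : a != 0 -> refl_mx a *m refl_mx a = 1%:M.
Proof.
move=> a0; apply/row_matrixP => i.
by rewrite -{1}[refl_mx a]mul1mx !row_mul refl_mx_invol.
Qed.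

Definition inv_norm (b : vec) : R := (Num.sqrt (dot b b))^-1.
Definition normalize (b : vec) : vec := inv_norm b *: b.

Lemma inv_norm_gt0 (b : vec) : b != 0 -> 0 < inv_norm b.
Proof. by move=> b0; rewrite invr_gt0 sqrtr_gt0 dot_gt0. Qed.

Lemma inv_norm_sqr (b : vec) : inv_norm b ^+ 2 = (dot b b)^-1.
Proof. by rewrite exprVn sqr_sqrtr ?dot_ge0. Qed.

Lemma dot_normalize (b g : vec) :
  dot (normalize b) (normalize g) = inv_norm b * inv_norm g * dot b g.
Proof. by rewrite dotZl dotZr mulrA. Qed.

Lemma dot_normalize_self (b : vec) : b != 0 -> dot (normalize b) (normalize b) = 1.
Proof.
by move=> b0; rewrite dot_normalize -expr2 inv_norm_sqr mulVf ?dot_eq0.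
Qed.

End InnerProduct.

Section RootSystem.
Variables (R : realType) (n : nat) (Phi : seq 'rV[R]_n).
Notation vec := 'rV[R]_n.
Hypothesis RS : is_root_system Phi.

Lemma root_neq0 a : a \in Phi -> a != 0.
Proof. by case: RS => _ Phi0 _ _ _ aPhi; apply: contraNneq Phi0 => <-. Qed.

Lemma root_refl a b : a \in Phi -> b \in Phi -> b *m refl_mx a \in Phi.
Proof. by case: RS => _ _ [_ refl_closed] _ _; apply: refl_closed. Qed.

Lemma rootN a : a \in Phi -> - a \in Phi.
Proof. by move=> aPhi; rewrite -refl_mx_self ?root_neq0 ?root_refl. Qed.

Lemma root_cartan a b : a \in Phi -> b \in Phi ->
  exists z : int, 2 * dot b a / dot a a = z%:~R.
Proof. by case: RS => _ _ _ cryst _; apply: cryst. Qed.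

Lemma weyl_root w b : in_weyl Phi w -> b \in Phi -> b *m w \in Phi.
Proof.
case=> s [sPhi ->]; elim: s sPhi b => [|a s IHs] sPhi b bPhi /=.
  by rewrite mulmx1.
rewrite mulmxA; apply: IHs => [x xs|]; first by apply: sPhi; rewrite inE xs orbT.
by apply: root_refl => //; apply: sPhi; rewrite inE eqxx.
Qed.

Lemma root_sub a b : a \in Phi -> b \in Phi -> 0 < dot a b -> a != b ->
  a - b \in Phi.
Proof.
move=> aPhi bPhi ab_gt0 neq_ab.
have aa_gt0 := dot_gt0 (root_neq0 aPhi); have bb_gt0 := dot_gt0 (root_neq0 bPhi).
have [z1 Hz1] := root_cartan bPhi aPhi; have [z2 Hz2] := root_cartan aPhi bPhi.
have z1_gt0 : (0 < z1)%R by rewrite -(ltr0z R) -Hz1 divr_gt0 ?mulr_gt0.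
have z2_gt0 : (0 < z2)%R by rewrite -(ltr0z R) -Hz2 dotC divr_gt0 ?mulr_gt0.
have [z1_1|z1_neq1] := eqVneq z1 1.
  have ab1 : 2 / dot b b * dot a b = 1 by rewrite mulrAC Hz1 z1_1.
  by have := root_refl bPhi aPhi; rewrite refl_mxE ab1 scale1r.
have [z2_1|z2_neq1] := eqVneq z2 1.
  have ba1 : 2 / dot a a * dot b a = 1 by rewrite mulrAC Hz2 z2_1.
  by have := rootN (root_refl aPhi bPhi); rewrite refl_mxE ba1 scale1r opprB.
(* Otherwise both Cartan integers are at least 2, so |a|^2, |b|^2 <= <a,b>
   and hence |a - b|^2 <= 0. *)
have z1_ge2 : (2 <= z1)%R by lia.
have z2_ge2 : (2 <= z2)%R by lia.
have bb_le : dot b b <= dot a b.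
  by rewrite -(ler_pM2l (@ltr0Sn R 1)) -ler_pdivlMr // Hz1 (ler_int R 2).
have aa_le : dot a a <= dot a b.
  by rewrite -(ler_pM2l (@ltr0Sn R 1)) -ler_pdivlMr // dotC Hz2 (ler_int R 2).
have : dot (a - b) (a - b) <= 0 by rewrite dotBl !dotBr (dotC b a); lra.
by rewrite leNgt dot_gt0 // subr_eq0.
Qed.

Lemma obtuse_root_dot_sqr_ge b g : b \in Phi -> g \in Phi -> dot b g < 0 ->
  dot b b * dot g g <= 4 * dot b g ^+ 2.
Proof.
move=> bPhi gPhi bg_lt0.
have bb_gt0 := dot_gt0 (root_neq0 bPhi); have gg_gt0 := dot_gt0 (root_neq0 gPhi).
have [z1 Hz1] := root_cartan bPhi gPhi; have [z2 Hz2] := root_cartan gPhi bPhi.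
have z1_lt0 : (z1 < 0)%R by rewrite -(ltrz0 R) -Hz1 pmulr_llt0 ?invr_gt0 // dotC; lra.
have z2_lt0 : (z2 < 0)%R by rewrite -(ltrz0 R) -Hz2 pmulr_llt0 ?invr_gt0 //; lra.
have : 1 <= (z1 * z2)%:~R :> R by rewrite ler1z; nia.
rewrite intrM -Hz1 -Hz2 dotC.
have -> : 2 * dot b g / dot b b * (2 * dot b g / dot g g) =
          4 * dot b g ^+ 2 / (dot b b * dot g g) by field; rewrite ?gt_eqF.
by rewrite ler_pdivlMr ?mulr_gt0 // mul1r.
Qed.

Lemma dot_normalize_le_half b g : b \in Phi -> g \in Phi -> dot b g < 0 ->
  dot (normalize b) (normalize g) <= - (1 / 2).
Proof.
move=> bPhi gPhi bg_lt0; have := obtuse_root_dot_sqr_ge bPhi gPhi bg_lt0.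
have bb_gt0 := dot_gt0 (root_neq0 bPhi); have gg_gt0 := dot_gt0 (root_neq0 gPhi).
have nb_gt0 := inv_norm_gt0 (root_neq0 bPhi).
have ng_gt0 := inv_norm_gt0 (root_neq0 gPhi).
have nbb := inv_norm_sqr b; have ngg := inv_norm_sqr g.
rewrite dot_normalize; set c := inv_norm b * inv_norm g * dot b g.
have c_lt0 : c < 0 by rewrite pmulr_rlt0 ?mulr_gt0.
have -> : dot b g ^+ 2 = c ^+ 2 * (dot b b * dot g g).
  by rewrite /c !exprMn nbb ngg; field; rewrite ?gt_eqF.
by rewrite mulrA ler_pMl ?mulr_gt0 // => c2; nra.
Qed.

End RootSystem.

Section Cone.
Variables (R : realType) (n : nat) (Delta : seq 'rV[R]_n).
Notation vec := 'rV[R]_n.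
Notation m := (size Delta).

Definition nonneg_comb (v : vec) : Prop :=
  exists2 r : 'I_m -> R, forall k, 0 <= r k & v = \sum_(k < m) r k *: Delta`_k.

Lemma nonneg_comb0 : nonneg_comb 0.
Proof. by exists (fun=> 0) => //; rewrite big1 // => k _; rewrite scale0r. Qed.

Lemma nonneg_combD u v : nonneg_comb u -> nonneg_comb v -> nonneg_comb (u + v).
Proof.
case=> [r r_ge0 ->] [s s_ge0 ->]; exists (fun k => r k + s k) => [k|].
  by rewrite addr_ge0.
by rewrite -big_split; apply: eq_bigr => k _; rewrite scalerDl.
Qed.

Lemma nonneg_combZ a v : 0 <= a -> nonneg_comb v -> nonneg_comb (a *: v).
Proof.
move=> a_ge0 [r r_ge0 ->]; exists (fun k => a * r k) => [k|].
  by rewrite mulr_ge0.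
by rewrite scaler_sumr; apply: eq_bigr => k _; rewrite scalerA.
Qed.

Lemma nonneg_comb_sum I (r : seq I) (P : pred I) (F : I -> vec) :
  (forall i, P i -> nonneg_comb (F i)) -> nonneg_comb (\sum_(i <- r | P i) F i).
Proof. by move=> FP; apply: big_ind => //; [apply: nonneg_comb0|apply: nonneg_combD]. Qed.

Lemma nonneg_int_comb_nonneg v : nonneg_int_comb Delta v -> nonneg_comb v.
Proof. by case=> c ->; exists (fun k => (c k)%:R). Qed.

Hypothesis Delta_free : lin_indep Delta.

Lemma nonneg_comb_addr_eq0 u v :
  nonneg_comb u -> nonneg_comb v -> u + v = 0 -> u = 0.
Proof.
case=> [r r_ge0 ->] [s s_ge0 ->]; rewrite -big_split /=.
under eq_bigr do rewrite -scalerDl.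
move=> /Delta_free rs0; apply: big1 => k _.
suff -> : r k = 0 by rewrite scale0r.
by have := rs0 k; have := r_ge0 k; have := s_ge0 k; lra.
Qed.

End Cone.

Lemma sumn_decr (I : finType) (c : I -> nat) (i : I) : (0 < c i)%N ->
  (\sum_j (c j - (j == i)))%N = (\sum_j c j).-1.
Proof.
move=> ci_gt0; rewrite (bigD1 i) //= [in RHS](bigD1 i) //= eqxx subn1.
rewrite (eq_bigr c) => [|j /negPf ->]; last by rewrite subn0.
by case: (c i) ci_gt0.
Qed.

Section SimpleSystem.
Variables (R : realType) (n : nat) (Phi Delta : seq 'rV[R]_n).
Notation vec := 'rV[R]_n.
Notation m := (size Delta).
Notation pos := (is_pos_root Phi Delta).
Hypothesis RS : is_root_system Phi.
Hypothesis SS : is_simple_system Phi Delta.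

Lemma simple_free : lin_indep Delta.
Proof. by case: SS. Qed.

Lemma pos_root_scale_addr_neq0 a v y :
  0 < a -> pos v -> nonneg_comb Delta y -> a *: v + y != 0.
Proof.
move=> a_gt0 [vPhi vint] ycone; apply/eqP => /(nonneg_comb_addr_eq0 simple_free).
move/(_ (nonneg_combZ (ltW a_gt0) (nonneg_int_comb_nonneg vint)) ycone)/eqP.
by rewrite scaler_eq0 gt_eqF //=; apply/negP/(root_neq0 RS vPhi).
Qed.

Lemma pos_root_addr_neq0 v y : pos v -> nonneg_comb Delta y -> v + y != 0.
Proof. by rewrite -[v in v + y]scale1r; apply: pos_root_scale_addr_neq0. Qed.

Lemma pos_rootN a : pos a -> ~ pos (- a).
Proof.
move=> apos [_ /nonneg_int_comb_nonneg Nacone].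
by move: (pos_root_addr_neq0 apos Nacone); rewrite subrr eqxx.
Qed.

Lemma asbool_pos_rootN a : a \in Phi -> `[< pos (- a) >] = ~~ `[< pos a >].
Proof.
move=> aPhi; case: SS => _ _ _ /(_ a aPhi) [aint|Naint].
  by rewrite (@asboolT (pos a)) ?asboolF //; apply: pos_rootN.
have Napos : pos (- a) by split; rewrite ?rootN.
by rewrite (asboolT Napos) asboolF // => apos; apply: pos_rootN apos Napos.
Qed.

Lemma simple_root (i : 'I_m) : Delta`_i \in Phi.
Proof. by case: SS => _ DeltaPhi _ _; apply/DeltaPhi/mem_nth. Qed.

Definition icomb (c : 'I_m -> nat) : vec := \sum_(j < m) (c j)%:R *: Delta`_j.

Lemma icombD c d : icomb c + icomb d = icomb (fun j => c j + d j)%N.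
Proof. by rewrite -big_split; apply: eq_bigr => j _; rewrite natrD scalerDl. Qed.

Lemma icomb_simple (i : 'I_m) : Delta`_i = icomb (fun j => (j == i) : nat).
Proof.
rewrite /icomb (bigD1 i) //= eqxx scale1r big1 ?addr0 // => j /negPf ->.
by rewrite scale0r.
Qed.

Lemma icombB_simple c (i : 'I_m) : (0 < c i)%N ->
  icomb c - Delta`_i = icomb (fun j => c j - (j == i))%N.
Proof.
move=> ci_gt0; rewrite icomb_simple /icomb -sumrB; apply: eq_bigr => j _.
by rewrite natrB ?scalerBl //; case: eqP => [->|].
Qed.

Lemma icomb_eq0 c : icomb c = 0 -> forall j, c j = 0%N.
Proof. by move=> /simple_free c0 j; apply/eqP; rewrite -(pnatr_eq0 R) c0. Qed.

Lemma simple_pos_root (i : 'I_m) : pos Delta`_i.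
Proof.
by split; [apply: simple_root | exists (fun j => (j == i) : nat); apply: icomb_simple].
Qed.

Lemma exists_simple_dot_gt0 c : icomb c != 0 ->
  exists2 i, (0 < c i)%N & 0 < dot (icomb c) Delta`_i.
Proof.
move=> c_neq0.
have [i /andP[ci_gt0 di_gt0]|no_i] :=
  pickP (fun i => (0 < c i)%N && (0 < dot (icomb c) Delta`_i)); first by exists i.
suff : dot (icomb c) (icomb c) <= 0 by rewrite leNgt dot_gt0.
rewrite [X in dot _ X]/icomb dot_sumr; apply: sumr_le0 => j _; rewrite dotZr.
have [->|cj_gt0] := posnP (c j); first by rewrite mul0r.
by move: (no_i j); rewrite cj_gt0 /= => /negbT; rewrite -leNgt; apply: mulr_ge0_le0.
Qed.

Lemma pos_root_addr_simple g (i : 'I_m) :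
  pos g -> dot g Delta`_i < 0 -> pos (g + Delta`_i).
Proof.
move=> gpos gi_lt0; have [gPhi [cg Eg]] := gpos; have [_ iint] := simple_pos_root i.
split; last by exists (fun j => cg j + (j == i))%N; rewrite Eg icomb_simple icombD.
rewrite -[Delta`_i]opprK; apply: root_sub => //; rewrite ?rootN ?simple_root //.
  by rewrite dotNr oppr_gt0.
rewrite -subr_eq0 opprK; apply: pos_root_addr_neq0 => //.
exact: nonneg_int_comb_nonneg.
Qed.

Lemma pos_root_subr_simple b g c (i : 'I_m) : pos b -> pos g ->
  b - Delta`_i = g + icomb c -> 0 < dot b Delta`_i -> pos (b - Delta`_i).
Proof.
move=> [bPhi _] gpos Eb bi_gt0; have [_ [cg Eg]] := gpos.
split; last by exists (fun j => cg j + c j)%N; rewrite Eb Eg; apply: icombD.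
apply: root_sub; rewrite ?simple_root //.
by rewrite -subr_eq0 Eb pos_root_addr_neq0 //; apply: nonneg_int_comb_nonneg; exists c.
Qed.

(* Induction on the height of b - g: a simple root alpha with
   <b - g, alpha> > 0 can either be removed from b or added to g. *)
Lemma rp_le_of_icomb N b g c : pos b -> pos g -> b - g = icomb c ->
  (\sum_j c j)%N = N -> rp_le Phi Delta g b.
Proof.
elim: N b g c => [|N IHN] b g c bpos gpos Ebg Sc.
  have c0 j : c j = 0%N by apply/eqP; rewrite -leqn0 -Sc (bigD1 j) //= leq_addr.
  suff -> : b = g by apply: rt_refl.
  by apply/eqP; rewrite -subr_eq0 Ebg /icomb big1 // => j _; rewrite c0 scale0r.
have [i ci_gt0 di_gt0] : exists2 i, (0 < c i)%N & 0 < dot (icomb c) Delta`_i.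
  by apply: exists_simple_dot_gt0; apply/eqP => /icomb_eq0 c0; move: Sc; rewrite big1.
set c' := fun j => (c j - (j == i))%N.
have Ec' : icomb c - Delta`_i = icomb c' by apply: icombB_simple.
have Sc' : (\sum_j c' j)%N = N by rewrite sumn_decr // Sc.
move: di_gt0; rewrite -Ebg dotBl subr_gt0 => gi_lt_bi.
have [bi_gt0|bi_le0] := ltP 0 (dot b Delta`_i).
  have Eb : b - Delta`_i = g + icomb c' by rewrite -Ec' -Ebg addrA [g + _]addrC subrK.
  have bipos := pos_root_subr_simple bpos gpos Eb bi_gt0.
  apply: (rt_trans _ _ _ (b - Delta`_i)).
    by apply: (IHN _ _ c') => //; rewrite -Ec' -Ebg addrAC.
  by apply: rt_step; split; rewrite // opprB addrC subrK mem_nth.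
have gipos := pos_root_addr_simple gpos (lt_le_trans gi_lt_bi bi_le0).
apply: (rt_trans _ _ _ (g + Delta`_i)).
  by apply: rt_step; split; rewrite // addrC addKr mem_nth.
by apply: (IHN _ _ c') => //; rewrite -Ec' -Ebg opprD addrA.
Qed.

Lemma antichain_dot_le0 Psi : is_antichain Phi Delta Psi ->
  forall b g, b \in Psi -> g \in Psi -> b != g -> dot b g <= 0.
Proof.
case=> _ Psi_pos incomp b g bPsi gPsi neq_bg; rewrite leNgt; apply/negP => bg_gt0.
have bpos := Psi_pos b bPsi; have gpos := Psi_pos g gPsi.
have [[bPhi _] [gPhi _]] := (bpos, gpos).
case: SS => _ _ _ /(_ _ (root_sub RS bPhi gPhi bg_gt0 neq_bg)) [[c Ec]|[c Ec]].
  by apply: (incomp g b) => //; [rewrite eq_sym | apply: rp_le_of_icomb Ec erefl].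
apply: (incomp b g) => //; apply: (rp_le_of_icomb _ _ _ erefl) => //.
by rewrite -opprB Ec.
Qed.

End SimpleSystem.

Lemma count_split T (a b : pred T) (s : seq T) :
  count a s = (count (fun w => a w && (b w == true)) s +
               count (fun w => a w && (b w == false)) s)%N.
Proof. by elim: s => //= w s ->; case: (a w); case: (b w) => /=; lia. Qed.

Lemma indep_of_count_flip (R : realType) (n : nat) (s : seq 'M[R]_n)
    (X Y : 'M[R]_n -> bool) :
  let N x y := count (fun w => (X w == x) && (Y w == y)) s in
  (forall x y, N x y = N (~~ x) y) -> (forall x y, N x y = N x (~~ y)) ->
  indep s X Y.
Proof.
move=> N flipX flipY.
have Nk x y : N x y = N true true.
  by case: x; case: y; [done | rewrite flipY | rewrite flipX | rewrite flipX flipY].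
have cX x : count (fun w => X w == x) s = (2 * N true true)%N.
  by rewrite (count_split _ Y) -/(N x true) -/(N x false) !Nk addnn mul2n.
have swap x y : count (fun w => (Y w == y) && (X w == x)) s = N x y.
  by apply: eq_count => w; rewrite andbC.
have cY y : count (fun w => Y w == y) s = (2 * N true true)%N.
  by rewrite (count_split _ X) !swap !Nk addnn mul2n.
have size_s : size s = (4 * N true true)%N.
  have -> : size s = (count (fun w => X w == true) s + count (fun w => X w == false) s)%N.
    by rewrite -count_predT (count_split _ X).
  by rewrite !cX -mulnDl.
move=> x y; rewrite /prob -/(N x y) Nk cX cY size_s.
have [->|k_neq0] := eqVneq (N true true) 0%N; first by rewrite !mul0r.
move: (N true true) k_neq0 => k k_neq0.
by rewrite !natrM; field; rewrite pnatr_eq0.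
Qed.

Section Weyl.
Variables (R : realType) (n : nat) (Phi Delta : seq 'rV[R]_n) (Wl : seq 'M[R]_n).
Notation X := (Xrv Phi Delta).
Hypothesis RS : is_root_system Phi.
Hypothesis SS : is_simple_system Phi Delta.
Hypothesis WE : weyl_enum Phi Wl.

Lemma weyl_refl w a : in_weyl Phi w -> a \in Phi -> in_weyl Phi (refl_mx a *m w).
Proof.
case=> s [sPhi ->] aPhi; exists (a :: s); split => //.
by move=> x; rewrite inE => /predU1P [->|/sPhi].
Qed.

Lemma perm_weyl_refl a : a \in Phi ->
  perm_eq Wl [seq refl_mx a *m w | w <- Wl].
Proof.
move=> aPhi; have [Wl_uniq Wl_weyl] := WE.
have reflK : involutive (fun w : 'M[R]_n => refl_mx a *m w).
  by move=> w /=; rewrite mulmxA refl_mxK ?mul1mx ?(root_neq0 RS).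
apply: uniq_perm; rewrite ?(map_inj_uniq (inv_inj reflK)) // => w.
apply/idP/mapP => [/Wl_weyl wW|[v /Wl_weyl vW ->]]; last exact/Wl_weyl/weyl_refl.
by exists (refl_mx a *m w); [apply/Wl_weyl/weyl_refl | rewrite reflK].
Qed.

Lemma count_weyl_refl a (E : pred 'M[R]_n) : a \in Phi ->
  count E Wl = count (fun w => E (refl_mx a *m w)) Wl.
Proof. by move=> aPhi; rewrite (permP (perm_weyl_refl aPhi)) count_map. Qed.

Lemma Xrv_refl_self b w : b \in Phi -> w \in Wl ->
  X b (refl_mx b *m w) = ~~ X b w.
Proof.
move=> bPhi /(proj2 WE) wW; have bwPhi := weyl_root RS wW bPhi.
rewrite /Xrv mulmxA refl_mx_self ?(root_neq0 RS) // mulNmx opprK.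
by rewrite asbool_pos_rootN // negbK.
Qed.

Lemma Xrv_refl_orth b g w : dot g b = 0 -> X g (refl_mx b *m w) = X g w.
Proof. by move=> gb0; rewrite /Xrv mulmxA refl_mx_orth. Qed.

Lemma indep_orth b g : b \in Phi -> g \in Phi -> dot b g = 0 ->
  indep Wl (X b) (X g).
Proof.
move=> bPhi gPhi bg0; apply: indep_of_count_flip => x y.
  rewrite (count_weyl_refl _ bPhi); apply: eq_in_count => w wWl /=.
  by rewrite Xrv_refl_self // Xrv_refl_orth 1?dotC //; case: x; case: (X b w).
rewrite (count_weyl_refl _ gPhi); apply: eq_in_count => w wWl /=.
by rewrite Xrv_refl_self // Xrv_refl_orth //; case: y; case: (X g w).
Qed.

End Weyl.

Lemma sumr_sym (V : pzRingType) (k : nat) (G : 'I_k -> 'I_k -> V) :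
  (forall i j, G i j = G j i) ->
  \sum_(i < k) \sum_(j < k) G i j =
  \sum_(i < k) G i i + 2 * \sum_(i < k) \sum_(j < k | (i < j)%N) G i j.
Proof.
move=> Gsym.
have split_row (i : 'I_k) : \sum_(j < k) G i j =
    G i i + \sum_(j < k | (i < j)%N) G i j + \sum_(j < k | (j < i)%N) G i j.
  rewrite (bigD1 i) //= (bigID (fun j : 'I_k => (i < j)%N)) /= addrA.
  congr (_ + _ + _); apply: eq_bigl => j.
    by apply: andb_idl; apply: contraTneq => ->; rewrite ltnn.
  by rewrite [RHS]ltn_neqAle -leqNgt.
rewrite (eq_bigr _ (fun i _ => split_row i)) !big_split /= -addrA; congr (_ + _).
rewrite (exchange_big_dep xpredT) //= mulr_natl mulr2n; congr (_ + _).
by apply: eq_bigr => i _; apply: eq_bigr => j _; apply: Gsym.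
Qed.

Section AntichainGraph.
Variables (R : realType) (n : nat) (Phi Delta : seq 'rV[R]_n) (Wl : seq 'M[R]_n).
Notation pos := (is_pos_root Phi Delta).
Notation dep := (dependent Phi Delta Wl).
Hypothesis RS : is_root_system Phi.
Hypothesis SS : is_simple_system Phi Delta.
Hypothesis WE : weyl_enum Phi Wl.

Lemma pos_root_normalize b : pos b -> nonneg_comb Delta (normalize b).
Proof.
case=> bPhi bint; apply: nonneg_combZ (nonneg_int_comb_nonneg bint).
exact/ltW/inv_norm_gt0/(root_neq0 RS).
Qed.

Lemma antichain_dot_normalize_le Psi b g : is_antichain Phi Delta Psi ->
  b \in Psi -> g \in Psi -> b != g ->
  dot (normalize b) (normalize g) <= - (1 / 2) * (dep b g)%:R.
Proof.
move=> AC bPsi gPsi neq_bg; have [_ Psi_pos _] := AC.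
have [[bPhi _] [gPhi _]] := (Psi_pos b bPsi, Psi_pos g gPsi).
have bg_le0 := antichain_dot_le0 RS SS AC bPsi gPsi neq_bg.
have [dep_bg|_] := boolP (dep b g); last first.
  have nb_ge0 := ltW (inv_norm_gt0 (root_neq0 RS bPhi)).
  have ng_ge0 := ltW (inv_norm_gt0 (root_neq0 RS gPhi)).
  by rewrite mulr0 dot_normalize mulr_ge0_le0 ?mulr_ge0.
rewrite mulr1; apply: (dot_normalize_le_half RS) => //.
rewrite lt_neqAle bg_le0 andbT; apply: contraTneq dep_bg => bg0.
by rewrite negbK; apply/asboolP/indep_orth.
Qed.

Lemma antichain_dependent_pairs Psi : is_antichain Phi Delta Psi ->
  (\sum_(i < size Psi) \sum_(j < size Psi | (i < j)%N) dep Psi`_i Psi`_j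
     <= (size Psi).-1)%N.
Proof.
move=> AC; have [Psi_uniq Psi_pos _] := AC.
have [->|size_gt0] := posnP (size Psi); first by rewrite big_ord0.
set E := (\sum_(i < _) _)%N.
pose u (i : 'I_(size Psi)) := normalize Psi`_i.
have Psi_nth (i : 'I_(size Psi)) : Psi`_i \in Psi by apply: mem_nth.
have x_gt0 : 0 < dot (\sum_i u i) (\sum_i u i).
  apply: dot_gt0; rewrite (bigD1 (Ordinal size_gt0)) //=.
  have i0pos := Psi_pos _ (Psi_nth (Ordinal size_gt0)); have [i0Phi _] := i0pos.
  have i0_gt0 := inv_norm_gt0 (root_neq0 RS i0Phi).
  rewrite {1}/u; apply: (pos_root_scale_addr_neq0 RS SS i0_gt0 i0pos).
  by apply: nonneg_comb_sum => i _; apply/pos_root_normalize/Psi_pos.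
have diag : \sum_i dot (u i) (u i) = (size Psi)%:R.
  rewrite (eq_bigr (fun=> 1)) ?sumr_const ?card_ord // => i _.
  by have [iPhi _] := Psi_pos _ (Psi_nth i); rewrite dot_normalize_self ?(root_neq0 RS).
have off_diag : \sum_(i < size Psi) \sum_(j < size Psi | (i < j)%N) dot (u i) (u j)
                 <= - (1 / 2) * E%:R.
  rewrite /E natr_sum mulr_sumr; apply: ler_sum => i _.
  rewrite natr_sum mulr_sumr; apply: ler_sum => j ij.
  by apply: (antichain_dot_normalize_le AC); rewrite // nth_uniq // ltn_eqF.
move: x_gt0; rewrite dot_suml; under eq_bigr do rewrite dot_sumr.
rewrite sumr_sym => [|i j]; last exact: dotC.
rewrite diag => x_gt0; have : (E%:R : R) < (size Psi)%:R by lra.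
by rewrite ltr_nat => E_lt; rewrite -ltnS prednK.
Qed.

Lemma antichain_dependent_degree Psi b : is_antichain Phi Delta Psi -> b \in Psi ->
  (count (fun g => (g != b) && dep b g) Psi <= 3)%N.
Proof.
move=> AC bPsi; have [Psi_uniq Psi_pos _] := AC.
set S := fun g => (g != b) && dep b g; set K := count S Psi.
set y := \sum_(g <- Psi | S g) normalize g.
have [bPhi bint] := Psi_pos b bPsi; have b_neq0 := root_neq0 RS bPhi.
have x_gt0 : 0 < dot (2 *: normalize b + y) (2 *: normalize b + y).
  apply: dot_gt0; rewrite scalerA.
  apply: (pos_root_scale_addr_neq0 RS SS _ (Psi_pos b bPsi)).
    by rewrite mulr_gt0 ?inv_norm_gt0.
  rewrite /y big_seq_cond; apply: nonneg_comb_sum => g /andP[gPsi _].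
  exact/pos_root_normalize/Psi_pos.
have cross : dot (normalize b) y <= - (1 / 2) * K%:R.
  rewrite /y /K dot_sumr -sum1_count natr_sum mulr_sumr [X in X <= _]big_seq_cond.
  rewrite [X in _ <= X]big_seq_cond; apply: ler_sum => g /andP[gPsi /andP[gb dep_bg]].
  have neq_bg : b != g by rewrite eq_sym.
  by move: (antichain_dot_normalize_le AC bPsi gPsi neq_bg); rewrite dep_bg.
have y_norm : dot y y <= K%:R.
  rewrite {1}/y /K dot_suml -sum1_count natr_sum [X in X <= _]big_seq_cond.
  rewrite [X in _ <= X]big_seq_cond; apply: ler_sum => g /andP[gPsi Sg].
  have [gPhi _] := Psi_pos g gPsi.
  rewrite dot_sumr -big_filter (bigD1_seq g) ?mem_filter ?Sg ?filter_uniq //=.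
  rewrite dot_normalize_self ?(root_neq0 RS) // -[X in _ <= X]addr0 lerD2l.
  rewrite big_seq_cond; apply: sumr_le0 => h /andP[]; rewrite mem_filter.
  case/andP=> _ hPsi hg.
  apply: le_trans (antichain_dot_normalize_le AC gPsi hPsi _) _; first by rewrite eq_sym.
  by rewrite mulNr oppr_le0 mulr_ge0 ?divr_ge0 ?ler0n ?ler01.
move: x_gt0 cross (dot_normalize_self b_neq0); move: (normalize b) => ub.
rewrite dotDl !dotDr !dotZl !dotZr (dotC y) => x_gt0 cross ub1.
have K_lt4 : (K%:R : R) < 4 by lra.
by rewrite ltr_nat in K_lt4.
Qed.

End AntichainGraph.

Theorem lemma4p3 (R : realType) (n : nat) (Phi Delta : seq 'rV[R]_n)
  (Wl : seq 'M[R]_n) (Psi : seq 'rV[R]_n) :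
  is_root_system Phi -> is_simple_system Phi Delta -> weyl_enum Phi Wl ->
  is_antichain Phi Delta Psi ->
  [/\ (forall b g, b \in Psi -> g \in Psi -> b != g -> dot b g <= 0),
      (\sum_(i < size Psi) \sum_(j < size Psi | (i < j)%N)
          dependent Phi Delta Wl Psi`_i Psi`_j <= (size Psi).-1)%N &
      (forall b, b \in Psi ->
         (count (fun g => (g != b) && dependent Phi Delta Wl b g) Psi <= 3)%N)].
Proof.
move=> RS SS WE AC; split.
- exact (antichain_dot_le0 RS SS AC).
- exact (antichain_dependent_pairs RS SS WE AC).
- move=> b; exact (antichain_dependent_degree RS SS WE AC).
Qed.
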